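(* Let $G=(V,E)$ be a transitive and finite directed graph which is not a cycle. Let $e_0\in E$ be such that $r(e_0)$ has in-degree $1$. Then: (i) $e_0$ is not a loop; (ii) the edge contraction $G/e_0$ has one fewer vertex of in-degree $1$ than $G$ has; (iii) $G/e_0$ is a finite transitive directed graph which is not a cycle.
   Context: A directed graph $G=(V,E,r,s)$; the in-degree of $v$ is $|r^{-1}(v)|$; a loop is an edge $e$ with $r(e)=s(e)$. $G$ is transitive if there is a path between any two vertices. ''$G$ is a cycle'' means $G$ is the $n$-cycle graph for some $n\ge1$ (vertices $v_1,\dots,v_n$, exactly one edge from $v_i$ to $v_{i+1}$, indices mod $n$). The edge contraction $G/e$ is obtained by removing the edge $e$ and identifying $s(e)$ and $r(e)$; when $r(e)\ne s(e)$ this is done by removing the vertex $r(e)$ and changing every edge with source (resp. range) $r(e)$ to have source (resp. range) $s(e)$. *)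

From mathcomp Require Import all_boot.
Set Implicit Arguments. Unset Strict Implicit. Unset Printing Implicit Defensive.

Record graph : Type := Graph {
  vert : finType;
  edge : finType;
  rg : edge -> vert;
  sc : edge -> vert }.

Section Graphs.
Variable G : graph.

Definition indeg (v : vert G) : nat := #|[pred e : edge G | rg e == v]|.

Definition n_indeg1 : nat := #|[pred v : vert G | indeg v == 1]|.

Definition is_loop (e : edge G) : Prop := rg e = sc e.

Definition adj : rel (vert G) := fun v w => [exists e : edge G, (sc e == v) && (rg e == w)].

Definition transitive_graph : Prop := forall v w : vert G, connect adj v w.

(* G is (isomorphic to) the n-cycle graph for some n >= 1:
   vertices v_0..v_{n-1} enumerating V bijectively, exactly one edge from v_i to
   v_{i+1 mod n}, and no other edges. *)
Definition is_cycle : Prop :=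
  exists n : nat, exists f : 'I_n -> vert G,
    0 < n /\ bijective f /\
    forall i j : 'I_n,
      #|[pred e : edge G | (sc e == f i) && (rg e == f j)]| = (j == ordS i : nat).

(* Edge contraction G/e. Vertices kept: all v <> r(e) (all vertices when e is
   a loop); edges kept: all f <> e; endpoints equal to r(e) are redirected to s(e). *)
Definition keepV (e : edge G) (v : vert G) : bool := (v != rg e) || (rg e == sc e).

Lemma keepV_redirect (e : edge G) (v : vert G) :
  keepV e (if v == rg e then sc e else v).
Proof.
rewrite /keepV; case: (eqVneq v (rg e)) => [_|->] //=.
by rewrite [rg e == _]eq_sym orNb.
Qed.

Definition cvert (e : edge G) : finType := {v : vert G | keepV e v}.
Definition cedge (e : edge G) : finType := {f : edge G | f != e}.

Definition redirect (e : edge G) (v : vert G) : cvert e :=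
  exist _ (if v == rg e then sc e else v) (keepV_redirect e v).

End Graphs.

Definition contract (G : graph) (e : edge G) : graph :=
  @Graph (cvert e) (cedge e)
    (fun f => redirect e (rg (val f)))
    (fun f => redirect e (sc (val f))).

From mathcomp Require Import all_boot zify.
Set Implicit Arguments. Unset Strict Implicit. Unset Printing Implicit Defensive.

(* Write [v = r(e0)] and [u = s(e0)].  Since [e0] is the only edge into [v],
   a loop at [v] would make [v] unreachable from every other vertex, so [G]
   would be the 1-cycle.  Otherwise every vertex [w <> v] keeps its incoming
   edges in [G/e0], and paths of [G] map to paths of [G/e0].
   A transitive graph in which every vertex has exactly one outgoing edge is
   a cycle.  If [G/e0] were a cycle, the merged vertex [u] would have a single
   outgoing edge; since [v] has an outgoing edge to some vertex other than
   [v], the only edge out of [u] in [G] is [e0], and [v] has exactly one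
   outgoing edge, to the successor of [u] in [G/e0].  So [G] is the cycle
   obtained by inserting [v] after [u]. *)

Lemma card_sig_pred (T : finType) (Q P : pred T) :
  #|[pred x : {x | Q x} | P (val x)]| = #|[pred x | Q x && P x]|.
Proof.
rewrite -(card_image val_inj); apply: eq_card => y; rewrite !inE.
apply/imageP/andP => [[x Px ->]|[Qy Py]]; first by split=> //; exact: valP.
by exists (exist _ y Qy).
Qed.

Lemma cardU_disjoint (T : finType) (A B : pred T) :
  [disjoint A & B] -> #|[predU A & B]| = #|A| + #|B|.
Proof. by move=> /pred0P AB; rewrite -cardUI (eq_card0 AB) addn0. Qed.

Lemma connect_into_eq (T : finType) (e : rel T) (v w : T) :
  (forall x, e x v -> x = v) -> connect e w v -> w = v.
Proof.
move=> into_v /connectP [p]; elim/last_ind: p => [|p z IHp] /=; first by move=> _ ->.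
rewrite rcons_path last_rcons => /andP [wp ez] zv.
by move: ez; rewrite -zv => /into_v /esym; exact: IHp.
Qed.

Definition nedges (G : graph) (x y : vert G) : nat :=
  #|[pred e : edge G | (sc e == x) && (rg e == y)]|.

Section Successor.
Variable G : graph.

Lemma adj_nedges (x y : vert G) : adj x y = (0 < nedges x y).
Proof. by apply/existsP/card_gt0P => -[f xfy]; exists f. Qed.

Lemma cycle_succ :
  is_cycle G -> exists nx, forall x y : vert G, nedges x y = (y == nx x).
Proof.
case=> n [f [_ [[g fK gK] fE]]]; exists (fun x => f (ordS (g x))) => x y.
by rewrite -{1}(gK x) -{1}(gK y) [LHS]fE -(can2_eq gK fK).
Qed.

Lemma succ_cycle (x0 : vert G) (nx : vert G -> vert G) :
  transitive_graph G -> (forall x y, nedges x y = (y == nx x)) -> is_cycle G.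
Proof.
move=> trG nxE.
have adjE : adj (G:=G) =2 frel nx.
  by move=> a b; rewrite adj_nedges nxE lt0b eq_sym.
have reach y : fconnect nx x0 y by rewrite -(eq_connect adjE) trG.
have nx_order : iter (order nx x0) nx x0 = x0.
  by apply/(orbitPcycle 2 4); rewrite inE -(eq_connect adjE) trG.
set n := order nx x0; pose f (i : 'I_n) := iter i nx x0.
pose g y : 'I_n := Ordinal (findex_max (reach y)).
have fK : cancel f g by move=> i; apply: val_inj; rewrite /= findex_iter.
have gK : cancel g f by move=> y; rewrite /f iter_findex.
have nxf i : nx (f i) = f (ordS i).
  rewrite /f /= -iterS; have [lt_in|le_ni] := ltnP i.+1 n.
    by rewrite modn_small.
  have -> : i.+1 = n by apply/eqP; rewrite eqn_leq le_ni ltn_ord.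
  by rewrite modnn nx_order.
exists n, f; split; first exact: order_gt0.
split; first exact: Bijective fK gK.
by move=> i j; rewrite -/(nedges _ _) nxE nxf (can_eq fK).
Qed.

End Successor.

Section InDegreeOne.
Variables (G : graph) (e0 : edge G).
Hypothesis indeg_rg : indeg (rg e0) = 1.

Lemma eq_rg_e0 (f : edge G) : (rg f == rg e0) = (f == e0).
Proof.
apply/idP/idP => [rg_f|/eqP -> //].
have : #|[pred e : edge G | rg e == rg e0]| <= 1 by rewrite -/(indeg _) indeg_rg.
by move/card_le1P/(_ e0); rewrite !inE eqxx => /(_ isT f); rewrite !inE rg_f.
Qed.

Lemma nedges_to_rg (x : vert G) : nedges x (rg e0) = (x == sc e0).
Proof.
rewrite /nedges (eq_card (B := [pred f | (x == sc e0) && (f == e0)])); last first.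
  move=> f; rewrite !inE eq_rg_e0 andbC.
  by case: (eqVneq f e0) => [->|_]; rewrite ?andbF //= andbT eq_sym.
by case: (x == sc e0); [apply: (@eq_card1 _ e0) | apply: eq_card0] => f; rewrite !inE.
Qed.

Lemma loop_cycle : transitive_graph G -> is_loop e0 -> is_cycle G.
Proof.
move=> trG loop_e0.
have only_rg w : w = rg e0.
  apply: connect_into_eq (trG w _) => x /existsP [f /andP [/eqP <- /eqP]].
  by move/eqP; rewrite eq_rg_e0 => /eqP ->.
apply: (succ_cycle (rg e0) (nx := id) trG) => x y.
by rewrite (only_rg x) (only_rg y) nedges_to_rg loop_e0 !eqxx.
Qed.

End InDegreeOne.

Section Contraction.
Variables (G : graph) (e0 : edge G).
Hypotheses (indeg_rg : indeg (rg e0) = 1) (rg_neq_sc : rg e0 != sc e0).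

Local Notation v := (rg e0).
Local Notation u := (sc e0).
Local Notation G' := (contract e0).

Lemma keepVE (w : vert G) : keepV e0 w = (w != v).
Proof. by rewrite /keepV (negbTE rg_neq_sc) orbF. Qed.

Lemma cvert_neq_rg (x : cvert e0) : val x != v.
Proof. by rewrite -keepVE; exact: valP. Qed.

Lemma redirect_id (w : vert G) : w != v -> val (redirect e0 w) = w.
Proof. by move=> /negbTE /= ->. Qed.

Lemma redirect_rg : val (redirect e0 v) = u.
Proof. by rewrite /= eqxx. Qed.

Lemma redirect_val (x : cvert e0) : redirect e0 (val x) = x.
Proof. by apply: val_inj; rewrite redirect_id ?cvert_neq_rg. Qed.

Lemma rg_cedge (f : cedge e0) : rg (val f) != v.
Proof. by rewrite eq_rg_e0 // (valP f). Qed.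

Lemma indeg_contract (x : cvert e0) : indeg (G := G') x = indeg (val x).
Proof.
rewrite /indeg /= (eq_card (B := [pred f : cedge e0 | rg (val f) == val x])); last first.
  by move=> f; rewrite !inE -val_eqE redirect_id ?rg_cedge.
rewrite (card_sig_pred (fun f => f != e0) (fun f => rg f == val x)).
apply: eq_card => f; rewrite !inE; case: (eqVneq f e0) => [->|//].
by rewrite eq_sym (negbTE (cvert_neq_rg x)).
Qed.

Lemma n_indeg1_contract : n_indeg1 G' + 1 = n_indeg1 G.
Proof.
rewrite /n_indeg1 (eq_card (B := [pred x : cvert e0 | indeg (val x) == 1])); last first.
  by move=> x; rewrite !inE indeg_contract.
rewrite (card_sig_pred (keepV e0) (fun w => indeg w == 1)).
rewrite [RHS](cardD1 v) inE indeg_rg eqxx addnC; congr (_ + _).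
by apply: eq_card => w; rewrite !inE keepVE.
Qed.

Lemma connect_contract (a b : vert G) :
  connect (adj (G := G)) a b -> connect (adj (G := G')) (redirect e0 a) (redirect e0 b).
Proof.
move=> /connectP [p]; elim: p a => [|x p IHp] a /=; first by move=> _ ->.
case/andP => /existsP [f /andP [/eqP <- /eqP <-]] fp b_last.
apply: connect_trans (IHp _ fp b_last).
have [->|f_neq_e0] := eqVneq f e0.
  suff -> : redirect e0 u = redirect e0 v by [].
  by apply: val_inj; rewrite redirect_rg redirect_id // eq_sym.
by apply: connect1; apply/existsP; exists (exist _ f f_neq_e0); rewrite !eqxx.
Qed.

Lemma transitive_contract : transitive_graph G -> transitive_graph G'.
Proof.
move=> trG x y; rewrite -(redirect_val x) -(redirect_val y).
exact: connect_contract.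
Qed.

Lemma nedges_contract (x y : cvert e0) :
  nedges (G := G') x y = nedges (val x) (val y) + (val x == u) * nedges v (val y).
Proof.
have [x_neq_v y_neq_v] := (cvert_neq_rg x, cvert_neq_rg y).
rewrite /nedges /= (eq_card (B := [pred f : cedge e0 |
    ((if sc (val f) == v then u else sc (val f)) == val x) && (rg (val f) == val y)])); last first.
  by move=> f; rewrite !inE -!val_eqE [val (redirect _ (rg _))]redirect_id ?rg_cedge.
rewrite (card_sig_pred (fun f => f != e0)
  (fun f => ((if sc f == v then u else sc f) == val x) && (rg f == val y))).
rewrite (eq_card (B := [predU [pred f | (sc f == val x) && (rg f == val y)]
                         & [pred f | (val x == u) && (sc f == v) && (rg f == val y)]])); last first.
  move=> f; rewrite !inE; have [->|f_neq_e0] := eqVneq f e0.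
    by rewrite [v == _]eq_sym (negbTE y_neq_v) !andbF.
  have [->|_] := eqVneq (sc f) v; last by rewrite andbF orbF.
  by rewrite [v == _]eq_sym (negbTE x_neq_v) [u == _]eq_sym andbT.
rewrite cardU_disjoint; last first.
  apply/pred0P => f /=; rewrite !inE; apply/negbTE/negP.
  case/and3P => /andP [/eqP sc_x _] /andP [_ /eqP sc_v] _.
  by apply/negP: x_neq_v; rewrite -sc_v sc_x; apply/negPn/eqP.
congr (_ + _); rewrite -[sval x]/(val x).
by case: (val x == u); rewrite ?mul1n ?mul0n; [apply: eq_card | apply: eq_card0].
Qed.

Lemma exists_out_rg : transitive_graph G -> exists2 y, y != v & 0 < nedges v y.
Proof.
move=> trG; have /connectP [[|y p] /=] := trG v u.
  by move=> _ u_v; move: rg_neq_sc; rewrite u_v eqxx.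
case/andP => v_y _ _; exists y; last by rewrite -adj_nedges.
by apply: contraTneq v_y => ->; rewrite adj_nedges nedges_to_rg // (negbTE rg_neq_sc).
Qed.

Section CycleLift.
Variable nx' : cvert e0 -> cvert e0.
Hypothesis nx'E : forall x y : cvert e0, nedges (G := G') x y = (y == nx' x).
Hypothesis trG : transitive_graph G.

Local Notation u' := (redirect e0 u).

Lemma nedges_sc_rg (y : cvert e0) :
  nedges u (val y) = 0 /\ nedges v (val y) = (y == nx' u').
Proof.
have u_neq_v : u != v by rewrite eq_sym.
have split_u' z : nedges u (val z) + nedges v (val z) = (z == nx' u').
  by rewrite -(nx'E u') nedges_contract !redirect_id // eqxx mul1n.
have [y0 y0_neq_v out_y0] := exists_out_rg trG.
have succ_u' : nx' u' = redirect e0 y0.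
  have := split_u' (redirect e0 y0); rewrite redirect_id //.
  by case: eqP => [->|_] //; lia.
move: (split_u' y) (split_u' (redirect e0 y0)); rewrite succ_u' eqxx redirect_id //.
by case: eqVneq => [->|_] /=; rewrite ?redirect_id //; lia.
Qed.

Definition lift_succ (x : vert G) : vert G :=
  if x == v then val (nx' u') else if x == u then v else val (nx' (redirect e0 x)).

Lemma nedges_lift_succ (x y : vert G) : nedges x y = (y == lift_succ x).
Proof.
rewrite /lift_succ; have [->|y_neq_v] := eqVneq y v.
  rewrite nedges_to_rg //; have [->|_] := eqVneq x v.
    by rewrite (negbTE rg_neq_sc) eq_sym (negbTE (cvert_neq_rg _)).
  case: eqP => _; first by rewrite eqxx.
  by rewrite eq_sym (negbTE (cvert_neq_rg _)).
rewrite -(redirect_id y_neq_v); set y' := redirect e0 y.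
have [->|x_neq_v] := eqVneq x v; first by have [_ ->] := nedges_sc_rg y'.
have [->|x_neq_u] := eqVneq x u.
  by have [-> _] := nedges_sc_rg y'; rewrite (negbTE (cvert_neq_rg _)).
have := nedges_contract (redirect e0 x) y'.
by rewrite redirect_id // (negbTE x_neq_u) mul0n addn0 nx'E val_eqE => <-.
Qed.

End CycleLift.

Lemma contract_cycle : transitive_graph G -> is_cycle G' -> is_cycle G.
Proof.
move=> trG /cycle_succ [nx' nx'E].
exact: (succ_cycle v trG (nedges_lift_succ nx'E trG)).
Qed.

End Contraction.

Theorem lemma3p3 (G : graph) (e0 : edge G) :
  transitive_graph G -> ~ is_cycle G -> indeg (rg e0) = 1 ->
  [/\ ~ is_loop e0,
      n_indeg1 (contract e0) + 1 = n_indeg1 G &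
      transitive_graph (contract e0) /\ ~ is_cycle (contract e0)].
Proof.
move=> trG not_cycle indeg_rg.
have not_loop : ~ is_loop e0 by move/(loop_cycle indeg_rg trG).
have rg_neq_sc : rg e0 != sc e0 by apply/eqP.
split=> //; first exact: n_indeg1_contract.
split; first exact: transitive_contract.
by move/(contract_cycle indeg_rg rg_neq_sc trG).
Qed.
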